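(* Let $k\ge 2$, $h=3k+1$, and let $W\in\mathcal W^2_{h\times 4}$ be $2$-full. Then $W$ contains a bench with its seat in column $1$ and legs in column $2$, and a bench with its seat in column $4$ and legs in column $3$.
   Context: A 2-dimensional binary word of dimensions $h\times w$ is an $h\times w$ matrix with entries in $\{\square,\blacksquare\}$ (filled cells $\blacksquare$, empty cells $\square$). Two cells $(i,j),(i',j')$ are adjacent if $|i-i'|+|j-j'|=1$; the degree of a filled cell is the number of filled cells adjacent to it. $\mathcal W^2_{h\times w}$ is the set of $h\times w$ binary words in which every filled cell has degree at most $2$; $W$ is $2$-full if its number of filled cells is maximal in $\mathcal W^2_{h\times w}$. For columns $j,j'$ with $|j-j'|=1$, a bench with seat in column $j$ and legs in column $j'$ is given by integers $n\ge 3$ and $i$ with $1\le i\le i+n-1\le h$ such that the cells $(i,j),(i+1,j),\dots,(i+n-1,j)$ are all filled, the cells $(i,j')$ and $(i+n-1,j')$ are filled, and the cells $(i+1,j'),\dots,(i+n-2,j')$ are empty. *)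

From mathcomp Require Import all_boot.
Set Implicit Arguments. Unset Strict Implicit. Unset Printing Implicit Defensive.

(* A 2-dimensional binary word of dimensions h x w: filled cells are [true]. *)
Definition word (h w : nat) := {ffun 'I_h * 'I_w -> bool}.

(* 1-based access: [cell W i j] for 1 <= i <= h, 1 <= j <= w is the entry in
   row i, column j; out-of-range indices read as empty. *)
Definition cell h w (W : word h w) (i j : nat) : bool :=
  match insub i.-1, insub j.-1 with
  | Some a, Some b => (0 < i) && (0 < j) && W (a, b)
  | _, _ => false
  end.

Definition distn (a b : nat) : nat := (a - b) + (b - a).

Definition adjacent h w (p q : 'I_h * 'I_w) : bool :=
  distn p.1 q.1 + distn p.2 q.2 == 1.

Definition degree h w (W : word h w) (p : 'I_h * 'I_w) : nat :=
  #|[set q | W q & adjacent p q]|.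

Definition in_W2 h w (W : word h w) : bool :=
  [forall p, W p ==> (degree W p <= 2)].

Definition nfilled h w (W : word h w) : nat := #|[set p | W p]|.

Definition two_full h w (W : word h w) : Prop :=
  in_W2 W /\ forall W' : word h w, in_W2 W' -> nfilled W' <= nfilled W.

(* bench with seat in column j and legs in column j' (1-based), |j - j'| = 1 *)
Definition has_bench h w (W : word h w) (j j' : nat) : Prop :=
  exists n i, 3 <= n /\ 1 <= i /\ i + n - 1 <= h /\
    (forall t, t < n -> cell W (i + t) j) /\
    cell W i j' /\ cell W (i + n - 1) j' /\
    (forall t, 1 <= t -> t <= n - 2 -> ~~ cell W (i + t) j').

(* Both benches are handled by one argument, with (a, b) = (1, 2) and (4, 3).
   A 2-full word has at least 8k + 4 filled cells, since the word [witness]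
   (a period-3 pattern of rows with 3, 3 and 2 filled cells, plus the corner cells
   (1, 1) and (h, 4)) lies in W^2.  Conversely, a word of W^2 with no bench with
   seat in column a and legs in column b has at most 8k + 3 filled cells.  This is
   a transfer-matrix bound: scanning the rows top-down, the state (previous row,
   current row, whether a seat is open) determines the admissible next rows, and a
   potential bounding 3 (filled cells so far) - 8 (rows so far) is checked to hold
   after the first row, to be preserved by every admissible step, and to be at
   most 1 after the last row; hence 3 nfilled <= 8h + 1 = 24k + 9.  The potential
   is the exact dynamic-programming maximum over the first six rows: the values
   after seven rows are dominated by those after four, so from row 4 on only the
   row number modulo 3 matters. *)

From mathcomp Require Import all_boot all_order ssralg ssrnum ssrint zify.
From Stdlib Require Import Classical.
Set Implicit Arguments. Unset Strict Implicit. Unset Printing Implicit Defensive.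

Section Cells.
Variables (h w : nat) (W : word h w).

Lemma cell_ord (q : 'I_h * 'I_w) : cell W q.1.+1 q.2.+1 = W q.
Proof.
case: q => a b; rewrite /cell /=.
case: insubP => [a' _ Ha|]; last by rewrite ltn_ord.
case: insubP => [b' _ Hb|]; last by rewrite ltn_ord.
by congr (W (_, _)); apply: val_inj.
Qed.

Lemma cell_range i j : cell W i j -> (0 < i <= h) && (0 < j <= w).
Proof.
rewrite /cell; case: insubP => // a ha _; case: insubP => // b hb _.
case/andP => /andP[i0 j0] _; apply/andP; split; lia.
Qed.

Lemma cell_out i j : ~~ ((0 < i <= h) && (0 < j <= w)) -> cell W i j = false.
Proof. exact/contraNF/cell_range. Qed.

Lemma sum_cell_at i j :
  \sum_(q : 'I_h * 'I_w) [&& q.1.+1 == i, q.2.+1 == j & W q] = cell W i j.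
Proof.
have [/andP[hi hj]|out] := boolP ((0 < i <= h) && (0 < j <= w)); last first.
  rewrite cell_out // big1 // => q _.
  apply/eqP; rewrite eqb0; apply/negP => /and3P[/eqP qi /eqP qj _].
  by move: out; rewrite -qi -qj !ltn_ord.
have hi' : i.-1 < h by lia.
have hj' : j.-1 < w by lia.
pose q0 : 'I_h * 'I_w := (Ordinal hi', Ordinal hj').
rewrite (bigD1 q0) //= big1 => [|q /negP nq]; last first.
  apply/eqP; rewrite eqb0; apply/negP => /and3P[/eqP qi /eqP qj _]; apply: nq.
  case: q qi qj => [[x hx] [y hy]] /= qi qj.
  by apply/eqP; congr (_, _); apply/val_inj => /=; lia.
have [i0 j0] : 0 < i /\ 0 < j by lia.
by rewrite -(cell_ord q0) /= !prednK // !eqxx addn0.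
Qed.

Lemma adjacentE (p q : 'I_h * 'I_w) : adjacent q p =
  [&& p.1.+1 == q.1 & p.2.+1 == q.2.+1] + [&& p.1.+1 == q.1.+2 & p.2.+1 == q.2.+1] +
  [&& p.1.+1 == q.1.+1 & p.2.+1 == q.2] + [&& p.1.+1 == q.1.+1 & p.2.+1 == q.2.+2] :> nat.
Proof. rewrite /adjacent /distn; lia. Qed.

Lemma degree_cells (q : 'I_h * 'I_w) : degree W q =
  cell W q.1 q.2.+1 + cell W q.1.+2 q.2.+1 + cell W q.1.+1 q.2 + cell W q.1.+1 q.2.+2.
Proof.
rewrite /degree -sum1_card big_mkcond /= -!sum_cell_at -!big_split /=.
apply: eq_bigr => p _; rewrite inE.
by case: (W p); rewrite /= ?andbT ?andbF // -adjacentE; case: adjacent.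
Qed.

Lemma nfilled_cells : nfilled W = \sum_(i < h) \sum_(j < w) cell W i.+1 j.+1.
Proof.
rewrite /nfilled -sum1_card big_mkcond /= pair_bigA /=.
by apply: eq_bigr => -[i j] _; rewrite inE (cell_ord (i, j)); case: (W _).
Qed.

Lemma in_W2_cells : in_W2 W <-> forall i j, cell W i j ->
  cell W i.-1 j + cell W i.+1 j + cell W i j.-1 + cell W i j.+1 <= 2.
Proof.
split=> [/forallP W2 i j cij | W2].
  have /andP[/andP[i0 ih] /andP[j0 jw]] := cell_range cij.
  have [hi' hj'] : i.-1 < h /\ j.-1 < w by lia.
  have := W2 (Ordinal hi', Ordinal hj'); rewrite -cell_ord degree_cells /= !prednK //.
  by rewrite cij.
apply/forallP => q; apply/implyP; rewrite -cell_ord degree_cells; exact: W2.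
Qed.
End Cells.

Definition row4 := (bool * bool * bool * bool)%type.

Definition rcol (r : row4) (j : nat) : bool :=
  match j with 1 => r.1.1.1 | 2 => r.1.1.2 | 3 => r.1.2 | 4 => r.2 | _ => false end.

Definition rsize (r : row4) : nat := rcol r 1 + rcol r 2 + rcol r 3 + rcol r 4.

Definition empty_row : row4 := (false, false, false, false).

Lemma rcol_empty j : rcol empty_row j = false.
Proof. by case: j => [|[|[|[|[|j]]]]]. Qed.

Definition rows : seq row4 :=
  [seq (odd i, odd i./2, odd (i %/ 4), odd (i %/ 8)) | i <- iota 0 16].

Lemma mem_rows (r : row4) : r \in rows.
Proof. by case: r => [[[[] []] []] []]. Qed.

Definition deg_le2 (p c n : row4) : bool :=
  all (fun j => rcol c j ==> (rcol p j + rcol n j + rcol c j.-1 + rcol c j.+1 <= 2))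
    (iota 1 4).

Definition row h (W : word h 4) (m : nat) : row4 :=
  (cell W m 1, cell W m 2, cell W m 3, cell W m 4).

Section Rows.
Variables (h : nat) (W : word h 4).

Lemma rcol_row m j : rcol (row W m) j = cell W m j.
Proof. by case: j => [|[|[|[|[|j]]]]] //; rewrite cell_out // !andbF. Qed.

Lemma row_out m : (m == 0) || (h < m) -> row W m = empty_row.
Proof. by move=> hm; rewrite /row !cell_out //; move: hm; lia. Qed.

Definition prefix_size (m : nat) : nat := \sum_(i < m) rsize (row W i.+1).

Lemma prefix_sizeS m : prefix_size m.+1 = prefix_size m + rsize (row W m.+1).
Proof. by rewrite /prefix_size big_ord_recr. Qed.

Lemma nfilled_rows : nfilled W = prefix_size h.
Proof.
by rewrite nfilled_cells; apply: eq_bigr => i _; rewrite !big_ord_recl big_ord0 addn0 !addnA.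
Qed.

Lemma in_W2_rows :
  in_W2 W <-> forall m, 0 < m <= h -> deg_le2 (row W m.-1) (row W m) (row W m.+1).
Proof.
rewrite in_W2_cells; split=> [W2 m hm | W2 i j cij].
  by apply/allP => j _; rewrite !rcol_row; apply/implyP; apply: W2.
have /andP[hi /andP[j0 j4]] := cell_range cij.
have /allP/(_ j) := W2 i hi; rewrite !rcol_row cij; apply.
by rewrite mem_iota; lia.
Qed.
End Rows.

Definition seat_open (a b : nat) (c n : row4) (o : bool) : bool :=
  [&& rcol n a, ~~ rcol n b, rcol c a & rcol c b || o].

Definition completes_bench (a b : nat) (o : bool) (n : row4) : bool :=
  [&& o, rcol n a & rcol n b].

Lemma interval_extend (P : nat -> Prop) i m :
  (forall t, i <= t <= m -> P t) -> P m.+1 -> forall t, i <= t <= m.+1 -> P t.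
Proof.
move=> Pim Pm t ht; have [tm|->] : t <= m \/ t = m.+1 by lia.
- by apply: Pim; lia.
- exact: Pm.
Qed.

Section SeatTracking.
Variables (h : nat) (W : word h 4) (a b : nat).

Fixpoint seat_open_at (m : nat) : bool :=
  if m is m'.+1 then seat_open a b (row W m') (row W m) (seat_open_at m') else false.

Lemma seat_open_atP m : seat_open_at m -> exists2 i, 0 < i < m &
  [/\ forall t, i <= t <= m -> cell W t a, cell W i b &
      forall t, i < t <= m -> ~~ cell W t b].
Proof.
elim: m => [|m IH] //= /and4P[am bm am' /orP bm'].
rewrite !rcol_row in am bm am' bm'.
case: bm' => [bm'|/IH [i im [ai bi nbi]]].
  have m0 := cell_range am'; exists m; first by lia.
  split=> // t ht; last by have -> : t = m.+1 by lia.
  by have [->|->] : t = m \/ t = m.+1 by lia.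
exists i; first by lia.
by split=> // t ht; [apply: (interval_extend ai) | apply: (interval_extend nbi)].
Qed.

Lemma bench_of_completion m :
  completes_bench a b (seat_open_at m) (row W m.+1) -> has_bench W a b.
Proof.
case/and3P => /seat_open_atP [i im [ai bi nbi]]; rewrite !rcol_row => am bm.
have /andP[/andP[_ mh] _] := cell_range am.
exists (m.+2 - i), i; do 3 (split; first lia).
split=> [t ht|]; first by apply: (interval_extend ai) => //; lia.
do 2 (split; first by rewrite // (_ : i + (m.+2 - i) - 1 = m.+1) //; lia).
by move=> t t1 t2; apply: nbi; lia.
Qed.
End SeatTracking.

Definition period_row (r : nat) : row4 :=
  match r %% 3 with
  | 0 => (true, false, true, true)
  | 1 => (true, true, false, true)
  | _ => (false, true, true, false)
  end.

Definition witness_row (h m : nat) : row4 :=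
  if (m == 0) || (h < m) then empty_row
  else if m == 1 then (true, true, true, false)
  else if m == h then (false, true, true, true)
  else period_row m.+1.

Definition witness (h : nat) : word h 4 :=
  [ffun q : 'I_h * 'I_4 => rcol (witness_row h q.1.+1) q.2.+1].

Lemma period_row_add3 k r : period_row (3 * k + r) = period_row r.
Proof. by rewrite /period_row mulnC modnMDl. Qed.

Lemma deg_le2_period r : deg_le2 (period_row r) (period_row r.+1) (period_row r.+2).
Proof.
elim/ltn_ind: r => -[|[|[|r]]] IH //.
by rewrite !(period_row_add3 1); apply: IH; lia.
Qed.

Lemma rsize_period r :
  rsize (period_row r) + rsize (period_row r.+1) + rsize (period_row r.+2) = 8.
Proof.
elim/ltn_ind: r => -[|[|[|r]]] IH //.
by rewrite !(period_row_add3 1); apply: IH; lia.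
Qed.

Lemma row_witness h m : row (witness h) m = witness_row h m.
Proof.
have [/andP[m0 mh]|out] := boolP ((0 < m) && (m <= h)); last first.
  by rewrite row_out /witness_row ?ifT //; move: out; lia.
case: m m0 mh => [|i] // _ ih.
have E j (hj : j < 4) : cell (witness h) i.+1 j.+1 = rcol (witness_row h i.+1) j.+1.
  by rewrite (cell_ord _ (Ordinal ih, Ordinal hj)) ffunE.
by rewrite /row !E //; case: witness_row => [[[]]].
Qed.

Lemma sum_period n : \sum_(i < 3 * n + 1) rsize (period_row i.+2) = 8 * n + 2.
Proof.
elim: n => [|n IH]; first by rewrite big_ord1.
rewrite (_ : 3 * n.+1 + 1 = (3 * n + 1).+3) ?big_ord_recr /= ?IH; last by lia.
by have := rsize_period (3 * n + 1).+2; lia.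
Qed.

Lemma sum_succ_eq n j : 0 < j <= n -> \sum_(i < n) (i.+1 == j) = 1.
Proof.
case: j => [|j] // /andP[_ jn].
rewrite (eq_bigr (fun i : 'I_n => if i == j :> nat then 1 else 0)) => [|i _].
  by rewrite -big_mkcond (big_ord1_eq _ (fun=> 1)) jn.
by rewrite (eqSS (nat_of_ord i) j); case: (_ == _).
Qed.

Section Witness.
Variable k : nat.
Hypothesis k2 : 2 <= k.
Let h := 3 * k + 1.

Lemma witness_row_period m : 1 < m < h -> witness_row h m = period_row m.+1.
Proof.
move=> hm; have out : (m == 0) || (h < m) = false by lia.
have [m1 mh] : (m == 1) = false /\ (m == h) = false by split; lia.
by rewrite /witness_row out m1 mh.
Qed.

Lemma witness_row_first : witness_row h 1 = (true, true, true, false).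
Proof. by rewrite /witness_row (_ : h < 1 = false) //; lia. Qed.

Lemma witness_row_last : witness_row h h = (false, true, true, true).
Proof.
have [h0 h1] : (h == 0) = false /\ (h == 1) = false by split; lia.
by rewrite /witness_row ltnn eqxx h0 h1.
Qed.

Lemma witness_row_out m : (m == 0) || (h < m) -> witness_row h m = empty_row.
Proof. by rewrite /witness_row => ->. Qed.

Lemma period_row_last : period_row h = period_row 1.
Proof. exact: period_row_add3. Qed.

Lemma witness_W2 : in_W2 (witness h).
Proof.
apply/in_W2_rows => m hm; rewrite !row_witness.
have [->|m1] := eqVneq m 1.
  rewrite witness_row_out // witness_row_first (witness_row_period (m := 2)) //; lia.
have [->|mh] := eqVneq m h.
  rewrite (witness_row_out (m := h.+1)) ?ltnSn ?orbT // witness_row_last.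
  rewrite witness_row_period ?prednK ?period_row_last //; lia.
rewrite (witness_row_period (m := m)); last by lia.
have [->|m2] := eqVneq m 2.
  rewrite witness_row_first (witness_row_period (m := 3)) //; lia.
have [mh1|mh1] := eqVneq m h.-1.
  rewrite witness_row_period ?mh1 ?prednK ?witness_row_last; try lia.
  by rewrite (_ : h.-1 = 3 * k + 0) ?period_row_add3 ?period_row_last //; lia.
rewrite !witness_row_period; try lia.
by rewrite prednK ?deg_le2_period //; lia.
Qed.

Lemma rsize_witness_row m : 0 < m <= h ->
  rsize (witness_row h m) = rsize (period_row m.+1) + (m == 1) + (m == h).
Proof.
move=> hm; have [->|m1] := eqVneq m 1.
  by rewrite witness_row_first (_ : (1 == h) = false) //; lia.
have [->|mh] := eqVneq m h.
  by rewrite witness_row_last (_ : h.+1 = 3 * k + 2) ?period_row_add3 //; lia.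
by rewrite witness_row_period; lia.
Qed.

Lemma nfilled_witness : nfilled (witness h) = 8 * k + 4.
Proof.
rewrite nfilled_rows /prefix_size.
pose F i := rsize (period_row i.+2) + (i.+1 == 1) + (i.+1 == h).
rewrite (eq_bigr (fun i : 'I_h => F i)); last first.
  by move=> i _; rewrite row_witness rsize_witness_row // ltn_ord.
by rewrite 2!big_split /= !sum_succ_eq ?(sum_period k); lia.
Qed.
End Witness.

Section Potentials.
Import Order.POrderTheory.
Local Open Scope ring_scope.

Definition gain (n : row4) : int := (3 * rsize n)%:Z - 8.

Definition le_some (v : int) (u : option int) : bool :=
  if u is Some x then v <= x else false.

Lemma le_someP v u : reflect (exists2 x : int, u = Some x & v <= x) (le_some v u).
Proof.
by case: u => [x|] /=; [apply: (iffP idP) => [|[_ [<-]]]; first exists x | right; case].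
Qed.

(* [Phi q p c o] bounds 3 (filled cells in rows 1..m) - 8 m over the scans whose
   rows m - 1 and m are p and c, with open-seat flag o, and phase m = q; [None]
   marks states that do not occur. *)
Definition potential := nat -> row4 -> row4 -> bool -> option int.

(* Phase 4 collects the rows m = 1 (mod 3), m >= 4, among them the last row. *)
Definition phase (m : nat) : nat := if (m < 4)%N then m else (4 + (m - 4) %% 3)%N.

Definition next_phase (q : nat) : nat := if (q < 6)%N then q.+1 else 4%N.

Lemma phaseS m : (0 < m)%N -> phase m.+1 = next_phase (phase m).
Proof.
case: m => [|[|[|[|m]]]] // _; rewrite /phase /next_phase /= !subSS subn0.
by case: ifP => ?; lia.
Qed.

Lemma phase_range m : (0 < m)%N -> (0 < phase m <= 6)%N.
Proof. by rewrite /phase; case: ifP => ? ?; lia. Qed.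

Lemma le_some_trans v v' u : v <= v' -> le_some v' u -> le_some v u.
Proof. by case: u => //= x; apply: le_trans. Qed.

Definition certifies_start (Phi : potential) : bool :=
  all (fun c => le_some (gain c) (Phi 1%N empty_row c false)) rows.

Definition certifies_step (a b : nat) (Phi : potential) : bool :=
  all (fun q => all (fun o => all (fun p => all (fun c =>
    if Phi q p c o is Some v then
      all (fun n => ~~ deg_le2 p c n || completes_bench a b o n ||
        le_some (v + gain n) (Phi (next_phase q) c n (seat_open a b c n o))) rows
    else true) rows) rows) [:: false; true]) (iota 1 6).

Definition certifies_end (Phi : potential) : bool :=
  all (fun o => all (fun p => all (fun c =>
    if Phi 4%N p c o is Some v then ~~ deg_le2 p c empty_row || (v <= 1) else true)
    rows) rows) [:: false; true].

Definition certificate (a b : nat) (Phi : potential) : bool :=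
  [&& certifies_start Phi, certifies_step a b Phi & certifies_end Phi].

Lemma certifies_startP Phi c :
  certifies_start Phi -> le_some (gain c) (Phi 1%N empty_row c false).
Proof. by move/allP; apply; rewrite mem_rows. Qed.

Lemma certifies_stepP a b Phi q p c o n v :
  certifies_step a b Phi -> (0 < q <= 6)%N -> Phi q p c o = Some v ->
  deg_le2 p c n -> ~~ completes_bench a b o n ->
  le_some (v + gain n) (Phi (next_phase q) c n (seat_open a b c n o)).
Proof.
move=> /allP/(_ q) step q6 Phiv pcn nb.
have /allP/(_ o) := step (ltac:(rewrite mem_iota; lia)).
move=> /(_ (ltac:(by case: (o)))) /allP/(_ p (mem_rows p)) /allP/(_ c (mem_rows c)).
by rewrite Phiv => /allP/(_ n (mem_rows n)); rewrite pcn (negbTE nb).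
Qed.

Lemma certifies_endP Phi p c o v :
  certifies_end Phi -> Phi 4%N p c o = Some v -> deg_le2 p c empty_row -> v <= 1.
Proof.
move=> /allP/(_ o (ltac:(by case: (o)))) /allP/(_ p (mem_rows p)) /allP/(_ c (mem_rows c)).
by move=> + Phiv pce; rewrite Phiv pce.
Qed.

Section PotentialBound.
Variables (h : nat) (W : word h 4) (a b : nat) (Phi : potential).
Hypotheses (W2 : in_W2 W) (no_bench : ~ has_bench W a b) (cert : certificate a b Phi).

Lemma potential_invariant m : (0 < m <= h)%N ->
  le_some ((3 * prefix_size W m)%:Z - (8 * m)%:Z)
          (Phi (phase m) (row W m.-1) (row W m) (seat_open_at W a b m)).
Proof.
case/and3P: cert => start step _.
elim: m => [|[|m] IH] // hm.
  rewrite /= /prefix_size big_ord1 !(@row_out _ W 0) // /seat_open rcol_empty !andbF.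
  by apply: le_some_trans (certifies_startP _ start).
have /le_someP[v Phiv le_v] := IH (ltac:(lia)).
have /(in_W2_rows W) /(_ m.+1 (ltac:(lia))) deg2 := W2.
have completion : ~~ completes_bench a b (seat_open_at W a b m.+1) (row W m.+2).
  by apply/negP => /bench_of_completion.
have := certifies_stepP step (phase_range (ltn0Sn m)) Phiv deg2 completion.
rewrite -phaseS //; apply: le_some_trans; rewrite prefix_sizeS /gain; lia.
Qed.

Lemma nfilled_le_of_certificate :
  (4 <= h)%N -> (h %% 3 = 1)%N -> (3 * nfilled W <= 8 * h + 1)%N.
Proof.
case/and3P: cert => _ _ fin h4 h1.
have /le_someP[v Phiv le_v] := potential_invariant (ltac:(lia) : (0 < h <= h)%N).
have ph : phase h = 4%N by rewrite /phase ltnNge h4 /=; lia.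
have /(in_W2_rows W) /(_ h (ltac:(lia))) := W2.
rewrite (@row_out _ W h.+1) ?ltnSn ?orbT // => deg2.
rewrite ph in Phiv; have := certifies_endP fin Phiv deg2.
by rewrite nfilled_rows; move: le_v; lia.
Qed.
End PotentialBound.

Definition table := seq (seq (seq (option int))).

Definition row_code (r : row4) : nat :=
  (rcol r 1 + 2 * rcol r 2 + 4 * rcol r 3 + 8 * rcol r 4)%N.

Definition lookup (t : table) (p c : row4) (o : bool) : option int :=
  nth None (nth [::] (nth [::] t o) (row_code c)) (row_code p).

Definition tabulate (f : row4 -> row4 -> bool -> option int) : table :=
  [seq [seq [seq f p c o | p <- rows] | c <- rows] | o <- [:: false; true]].

Definition omax (u v : option int) : option int :=
  match u, v with
  | Some x, Some y => Some (Num.max x y)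
  | None, _ => v
  | _, None => u
  end.

Definition dp_start : table :=
  tabulate (fun p c o => if (p == empty_row) && ~~ o then Some (gain c) else None).

Definition dp_step (a b : nat) (t : table) : table :=
  tabulate (fun c n o' => foldr omax None
    [seq if [&& deg_le2 p c n, ~~ completes_bench a b o n & seat_open a b c n o == o']
         then omap (fun v => v + gain n) (lookup t p c o) else None
    | p <- rows, o <- [:: false; true]]).

(* The [let] makes vm_compute build the six tables once. *)
Definition dp_potential (a b : nat) : potential :=
  let T := traject (dp_step a b) dp_start 6 in fun q => lookup (nth [::] T q.-1).

Lemma dp_certificate12 : certificate 1 2 (dp_potential 1 2).
Proof. by vm_compute. Qed.

Lemma dp_certificate43 : certificate 4 3 (dp_potential 4 3).
Proof. by vm_compute. Qed.
End Potentials.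

Theorem mainTheorem17 (k : nat) (W : word (3 * k + 1) 4) :
  2 <= k -> two_full W -> has_bench W 1 2 /\ has_bench W 4 3.
Proof.
move=> k2 [W2 Wmax].
have := Wmax _ (witness_W2 k2); rewrite (nfilled_witness k2) => lower.
have bound a b : certificate a b (dp_potential a b) -> has_bench W a b.
  move=> cert; apply: NNPP => no_bench.
  have := nfilled_le_of_certificate W2 no_bench cert (ltac:(lia)) (ltac:(lia)); lia.
by split; apply: bound; [exact: dp_certificate12 | exact: dp_certificate43].
Qed.
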